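(* Let $p\ge5$ be a prime, let $\lambda,k\in\mathbb{N}$, and let $\zeta_k$ be a $k$th root of unity. Then for all integers $r$ and $m$ with $m\ge\lambda$, the power series $(1-(\zeta_k-q)^{krp})^m\in\mathbb{Z}[\zeta_k][[q]]$ satisfies $$(1-(\zeta_k-q)^{krp})^m\equiv O\!\left(q^{\lambda-1+p(m-\lambda-1)}\right)\pmod{p^\lambda},$$ i.e. every coefficient of $q^i$ with $i<\lambda-1+p(m-\lambda-1)$ lies in $p^\lambda\mathbb{Z}[\zeta_k]$.
   Context: $(\zeta_k-q)^{krp}$ for negative exponent is expanded as a power series in $q$ with coefficients in $\mathbb{Z}[\zeta_k]$. *)

From HB Require Import structures.
From mathcomp Require Import all_boot all_order all_algebra all_field.
Set Implicit Arguments. Unset Strict Implicit. Unset Printing Implicit Defensive.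
Import Order.TTheory GRing.Theory Num.Theory.
Local Open Scope ring_scope.

(* Formal power series in q over algC (the algebraic complex numbers),
   represented by their coefficient sequence: a i = coefficient of q^i. *)
Definition fps := nat -> algC.

Definition fps_one : fps := fun i => (i == 0%N)%:R.
Definition fps_sub (a b : fps) : fps := fun i => a i - b i.
Definition fps_mul (a b : fps) : fps :=
  fun i => \sum_(j < i.+1) a j * b (i - j)%N.
Definition fps_pow (a : fps) (n : nat) : fps := iter n (fps_mul a) fps_one.

Definition fps_lin (z : algC) : fps :=
  fun i => if i == 0%N then z else if i == 1%N then -1 else 0.
(* its inverse (for z <> 0): 1/(z - q) = sum_i z^{-(i+1)} q^i *)
Definition fps_lin_inv (z : algC) : fps := fun i => z^-1 ^+ i.+1.

Definition fps_zpow (z : algC) (n : int) : fps :=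
  match n with
  | Posz n => fps_pow (fps_lin z) n
  | Negz n => fps_pow (fps_lin_inv z) n.+1
  end.

(* c lies in p^l Z[z]:  c = p^l * P(z) for some integer polynomial P *)
Definition in_pow_ideal (p l : nat) (z c : algC) : Prop :=
  exists P : {poly int}, c = (p ^ l)%:R * (map_poly (fun x : int => x%:~R) P).[z].

From HB Require Import structures.
From mathcomp Require Import all_boot all_order all_algebra all_field.
From mathcomp Require Import ring zify boolp.
Import Order.TTheory GRing.Theory Num.Theory.
Set Implicit Arguments. Unset Strict Implicit. Unset Printing Implicit Defensive.
Local Open Scope ring_scope.

(* Let S = Z[z] and let I be the ideal (X^p, pX) of S[X].  Since p divides
   every inner binomial coefficient and p is odd, (z - X)^p = z^p mod I, hence
   1 - (z - X)^(ktp) lies in I when z^k = 1.  For a negative exponent, 1/(z - X)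
   is replaced by its truncation G below degree N: from G (z - X) = 1 - c X^N,
   the series 1 - G^n agrees below degree N with -(1 - (z - X)^n) G^n, again an
   element of I.  Finally, writing D = X^p U + p X V, the j-th binomial term of
   D^m is X^(p(m-j)+j) p^j U^(m-j) V^j: for j >= lam it is divisible by p^lam,
   and for j < lam it starts in degree at least lam - 1 + p(m - lam + 1). *)

Lemma exp_one_sub_XnM (R : comNzRingType) (c : {poly R}) N n :
  exists Q, (1 - 'X^N * c) ^+ n = 1 + 'X^N * Q.
Proof.
have := subrXX (1 - 'X^N * c) 1 n; rewrite expr1n => /eqP; rewrite subr_eq => /eqP ->.
by move: (\sum_(i < n) _) => s; exists (- (c * s)); ring.
Qed.

Lemma geom_inv_mul (R : fieldType) (z : R) N : z != 0 ->
  \poly_(j < N) z^-1 ^+ j.+1 * (z%:P - 'X) = 1 - 'X^N * (z^-1 ^+ N)%:P.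
Proof.
move=> z_nz; elim: N => [|N IHN].
  by rewrite poly_def big_ord0 mul0r !expr0 mul1r subrr.
rewrite poly_def big_ord_recr /= -(poly_def N (fun j => z^-1 ^+ j.+1)) mulrDl IHN -mul_polyC.
have zVz : (z^-1)%:P * z%:P = 1 by rewrite -polyCM mulVf.
apply/eqP; rewrite -subr_eq0; apply/eqP.
transitivity ((z^-1 ^+ N)%:P * 'X^N * ((z^-1)%:P * z%:P - 1)).
  by rewrite exprS exprSr !polyCM; ring.
by rewrite zVz subrr mulr0.
Qed.

Lemma rpredV_unity_root (R : fieldType) (S : subringClosed R) (z : R) k :
  z \in S -> z ^+ k.+1 = 1 -> z^-1 \in S.
Proof.
move=> Sz zk1; have z_nz : z != 0 by move: (oner_neq0 R); rewrite -zk1 expf_eq0.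
by rewrite -[z^-1]mul1r -zk1 exprSr mulfK // rpredX.
Qed.

Section IdealXpPX.

Variables (R : comNzRingType) (S : subringClosed R) (p : nat).

Definition in_Xp_pX (D : {poly R}) : Prop :=
  exists U V, [/\ U \is a polyOver S, V \is a polyOver S &
                  D = 'X^p * U + p%:R * ('X * V)].

Lemma in_Xp_pX0 : in_Xp_pX 0.
Proof. by exists 0, 0; rewrite !mulr0 addr0 rpred0. Qed.

Lemma in_Xp_pXD D E : in_Xp_pX D -> in_Xp_pX E -> in_Xp_pX (D + E).
Proof.
move=> [U [V [SU SV ->]]] [U' [V' [SU' SV' ->]]].
by exists (U + U'), (V + V'); rewrite !rpredD //; split=> //; ring.
Qed.

Lemma in_Xp_pXN D : in_Xp_pX D -> in_Xp_pX (- D).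
Proof.
move=> [U [V [SU SV ->]]].
by exists (- U), (- V); rewrite !rpredN; split=> //; ring.
Qed.

Lemma in_Xp_pXMr D Q : in_Xp_pX D -> Q \is a polyOver S -> in_Xp_pX (D * Q).
Proof.
move=> [U [V [SU SV ->]]] SQ.
by exists (U * Q), (V * Q); rewrite !rpredM //; split=> //; ring.
Qed.

Lemma in_Xp_pX_sum (I : finType) (F : I -> {poly R}) :
  (forall i, in_Xp_pX (F i)) -> in_Xp_pX (\sum_i F i).
Proof. by move=> IF; apply: big_ind; [exact: in_Xp_pX0 | exact: in_Xp_pXD |]. Qed.

Lemma in_Xp_pX_subrXX A B n :
  A \is a polyOver S -> B \is a polyOver S -> in_Xp_pX (A - B) ->
  in_Xp_pX (A ^+ n - B ^+ n).
Proof.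
move=> SA SB IAB; rewrite subrXX; apply: in_Xp_pXMr => //.
by rewrite rpred_sum // => i _; rewrite rpredM ?rpredX.
Qed.

Lemma lin_exp_prime_in_Xp_pX z : prime p -> odd p -> z \in S ->
  in_Xp_pX ((z%:P - 'X) ^+ p - (z ^+ p)%:P).
Proof.
move=> p_pr p_odd Sz; rewrite exprBn big_ord_recl /= subn0 mulr1 mul1r bin0.
rewrite mulr1n rmorphXn addrAC subrr add0r; apply: in_Xp_pX_sum => -[i /= lt_ip].
rewrite /bump /= add1n; have [lt_i1p | ] := ltnP i.+1 p.
  have /dvdnP[c ->] := prime_dvd_bin p_pr (lt_i1p : (0 < i.+1 < p)%N).
  exists 0, ((-1) ^+ i.+1 * z%:P ^+ (p - i.+1) * 'X ^+ i *+ c).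
  split; rewrite ?rpred0 ?rpredMn ?rpredM ?rpredX ?rpredN ?rpred1 ?polyOverC
    ?polyOverX //.
  set a := _ * z%:P ^+ _.
  by rewrite [in LHS]exprS mulr0 add0r mulrnA mulr_natl mulrnAr mulrCA.
move=> le_p_i1; have ip : i.+1 = p by apply/anti_leq; rewrite lt_ip le_p_i1.
rewrite ip subnn binn mulr1n expr0 mulr1.
exists (-1), 0; rewrite rpredN rpred1 rpred0; split=> //.
by rewrite -signr_odd p_odd; ring.
Qed.

Lemma one_sub_lin_exp_in_Xp_pX z k t : prime p -> odd p -> z \in S ->
  z ^+ k = 1 -> in_Xp_pX (1 - (z%:P - 'X) ^+ (k * t * p)).
Proof.
move=> p_pr p_odd Sz zk1.
have Slin : z%:P - 'X \is a polyOver S by rewrite rpredB ?polyOverC ?polyOverX.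
have Szp : (z ^+ p)%:P \is a polyOver S by rewrite polyOverC rpredX.
have zpk : (z ^+ p) ^+ k = 1 by rewrite -exprM mulnC exprM zk1 expr1n.
have := in_Xp_pX_subrXX k (rpredX p Slin) Szp (lin_exp_prime_in_Xp_pX p_pr p_odd Sz).
rewrite -rmorphXn zpk rmorph1 -exprM => /(in_Xp_pX_subrXX t (rpredX _ Slin) (rpred1 _)).
rewrite expr1n -exprM => /in_Xp_pXN.
by rewrite opprB [(k * t * p)%N]mulnC mulnA.
Qed.

End IdealXpPX.

Lemma coef_exp_in_Xp_pX (R : numFieldType) (S : subringClosed R) p D m lam i :
  (0 < p)%N -> in_Xp_pX S p D -> (lam <= m)%N ->
  (i%:Z < lam%:Z - 1 + p%:Z * (m%:Z - lam%:Z - 1))%R ->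
  (p ^ lam)%:R^-1 * (D ^+ m)`_i \in S.
Proof.
move=> p_gt0 [U [V [SU SV ->]]] le_lam_m lt_i.
rewrite exprDn coef_sum mulr_sumr rpred_sum // => -[j /= lt_jm] _.
have -> : ('X^p * U) ^+ (m - j) * (p%:R * ('X * V)) ^+ j
        = 'X^(p * (m - j) + j) * (U ^+ (m - j) * V ^+ j) *+ p ^ j.
  by rewrite !exprMn -natrX -exprM exprD -[RHS]mulr_natl; ring.
rewrite !coefMn coefXnM; have [lt_j_lam | le_lam_j] := ltnP j lam.
  by rewrite ifT ?mul0rn ?mulr0 ?rpred0 //; nia.
case: ifP => _; first by rewrite !mul0rn mulr0 rpred0.
have p_lam_nz : (p ^ lam)%:R != 0 :> R by rewrite pnatr_eq0 -lt0n expn_gt0 p_gt0.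
rewrite mulrnAr rpredMn // -[in (p ^ j)%N](subnKC le_lam_j) expnD mulrnA.
rewrite mulrnAr rpredMn // -[X in _ * X]mulr_natl mulKf //.
by apply/polyOverP; rewrite rpredM ?rpredX.
Qed.

(* Z[z], made a boolean predicate with [asbool] so that the theories of
   [subringClosed] predicates and of [polyOver] apply to it. *)
Definition Zz (z : algC) : {pred algC} :=
  fun c => `[< exists P : {poly int}, c = (map_poly intr P).[z] >].

Fact Zz_subring_closed z : subring_closed (Zz z).
Proof.
split=> [|_ _ /asboolP[P ->] /asboolP[Q ->] | _ _ /asboolP[P ->] /asboolP[Q ->]];
  apply/asboolP.
- by exists 1; rewrite rmorph1 hornerC.
- by exists (P - Q); rewrite rmorphB hornerD hornerN.
- by exists (P * Q); rewrite rmorphM hornerM.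
Qed.

HB.instance Definition _ z :=
  GRing.isSubringClosed.Build algC (Zz z) (Zz_subring_closed z).

Lemma Zz_gen z : z \in Zz z.
Proof. by apply/asboolP; exists 'X; rewrite map_polyX hornerX. Qed.

Lemma in_pow_ideal_Zz p lam z c : (0 < p)%N ->
  (p ^ lam)%:R^-1 * c \in Zz z -> in_pow_ideal p lam z c.
Proof.
move=> p_gt0 /asboolP[P defP]; exists P; rewrite -defP mulVKf //.
by rewrite pnatr_eq0 -lt0n expn_gt0 p_gt0.
Qed.

Definition agree_below (N : nat) (P : {poly algC}) (a : fps) : Prop :=
  forall j, (j < N)%N -> P`_j = a j.

Lemma agree_below_exp N P a n :
  agree_below N P a -> agree_below N (P ^+ n) (fps_pow a n).
Proof.
move=> PaN; elim: n => [|n IHn] i lt_iN; first by rewrite expr0 coef1.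
rewrite exprS coefM /fps_pow /= -/(fps_pow a n) /fps_mul.
apply: eq_bigr => -[j /= le_ji] _.
by rewrite PaN ?IHn // (leq_ltn_trans _ lt_iN) ?leq_subr.
Qed.

Lemma agree_below_1B N P a :
  agree_below N P a -> agree_below N (1 - P) (fps_sub fps_one a).
Proof. by move=> PaN j lt_jN; rewrite coefB coef1 PaN. Qed.

Lemma agree_below_addXnM N P Q a :
  agree_below N P a -> agree_below N (P + 'X^N * Q) a.
Proof. by move=> PaN j lt_jN; rewrite coefD coefXnM lt_jN addr0 PaN. Qed.

Lemma agree_below_lin z N : agree_below N (z%:P - 'X) (fps_lin z).
Proof. by move=> [|[|j]] _; rewrite coefB coefC coefX /= ?subr0 ?sub0r. Qed.

Lemma agree_below_geom_inv z N :
  agree_below N (\poly_(j < N) z^-1 ^+ j.+1) (fps_lin_inv z).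
Proof. by move=> j lt_jN; rewrite coef_poly lt_jN. Qed.

Lemma fps_zpowN z n : (0 < n)%N -> fps_zpow z (- n%:Z) = fps_pow (fps_lin_inv z) n.
Proof. by case: n => // n _; rewrite -NegzE. Qed.

Lemma one_sub_zpow_agree_Xp_pX p k (z : algC) (r : int) N :
  prime p -> odd p -> z ^+ k = 1 ->
  exists2 D, in_Xp_pX (Zz z) p D &
    agree_below N D (fps_sub fps_one (fps_zpow z (k%:Z * r * p%:Z))).
Proof.
move=> p_pr p_odd zk1; have Sz := Zz_gen z.
have nonneg t : exists2 D, in_Xp_pX (Zz z) p D &
    agree_below N D (fps_sub fps_one (fps_zpow z (k * t * p)%N)).
  exists (1 - (z%:P - 'X) ^+ (k * t * p)); first exact: one_sub_lin_exp_in_Xp_pX.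
  exact/agree_below_1B/agree_below_exp/agree_below_lin.
case: r => t; first by rewrite -!PoszM; apply: nonneg.
case: k zk1 nonneg => [|k] zk1 nonneg; first by rewrite !mul0r; apply: (nonneg 0%N).
rewrite NegzE mulrN mulNr -!PoszM fps_zpowN; last by rewrite !muln_gt0 (prime_gt0 p_pr).
set n := (k.+1 * t.+1 * p)%N; set G := \poly_(j < N) z^-1 ^+ j.+1.
have z_nz : z != 0 by move: (oner_neq0 algC); rewrite -zk1 expf_eq0.
have SG : G \is a polyOver (Zz z).
  by apply: polyOver_poly => j _; rewrite rpredX // (rpredV_unity_root Sz zk1).
have [Q] := exp_one_sub_XnM ((z^-1 ^+ N)%:P) N n.
rewrite -geom_inv_mul // exprMn => GLn.
exists (- ((1 - (z%:P - 'X) ^+ n) * G ^+ n)).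
  by apply/in_Xp_pXN/in_Xp_pXMr; [exact: one_sub_lin_exp_in_Xp_pX | exact: rpredX].
rewrite mulrBl mul1r opprB mulrC GLn addrAC.
exact/agree_below_addXnM/agree_below_1B/agree_below_exp/agree_below_geom_inv.
Qed.

Theorem lemma4p9 (p lam k : nat) (zeta : algC) (r : int) (m : nat) :
  prime p -> (5 <= p)%N -> zeta ^+ k = 1 -> (lam <= m)%N ->
  forall i : nat,
    (i%:Z < lam%:Z - 1 + p%:Z * (m%:Z - lam%:Z - 1))%R ->
    in_pow_ideal p lam zeta
      (fps_pow (fps_sub fps_one (fps_zpow zeta (k%:Z * r * p%:Z))) m i).
Proof.
move=> p_pr p_ge5 zk1 le_lam_m i lt_i.
have p_gt0 := prime_gt0 p_pr.
have p_odd : odd p by case/even_prime: p_pr p_ge5 => [->|].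
have [D ID agreeD] := one_sub_zpow_agree_Xp_pX r i.+1 p_pr p_odd zk1.
rewrite -(agree_below_exp m agreeD) //.
exact/(in_pow_ideal_Zz p_gt0)/(coef_exp_in_Xp_pX p_gt0 ID le_lam_m lt_i).
Qed.
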